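(* Let $A\in\mathbb{R}^{D\times k}$ be a nonnegative matrix of full column rank and let $\delta\ge0$. Then $$\lambda_\delta(A)=\max\{\|x\|_\infty-\delta\|x\|_1 \;:\; x\in\mathbb{R}^k,\ \|Ax\|_1\le 1\}.$$ Equivalently, $\lambda_\delta(A)$ equals the optimal value of the program: maximize $\mathrm{tr}(Q)-\delta\sum_{i,j}|Q_{ij}|$ over $Q\in\mathbb{R}^{k\times k}$ subject to $\sum_{i,j}|(QA^\top)_{ij}|\le 1$.
   Context: For a matrix $M$, $\|M\|_{\max}=\max_{i,j}|M_{ij}|$. For $\delta\ge 0$, $\lambda_\delta(A)$ denotes the optimal value of the convex program: minimize $\|B\|_{\max}$ over $B\in\mathbb{R}^{k\times D}$ subject to $\|BA-I_k\|_{\max}\le\delta$. *)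

From HB Require Import structures.
From mathcomp Require Import all_boot all_order all_algebra.
Set Implicit Arguments. Unset Strict Implicit. Unset Printing Implicit Defensive.
Import Order.TTheory GRing.Theory Num.Theory.
Local Open Scope ring_scope.

Definition mxmaxnorm (R : realFieldType) (m n : nat) (M : 'M[R]_(m, n)) : R :=
  \big[Num.max/0]_(i < m) \big[Num.max/0]_(j < n) `|M i j|.

Definition mxl1 (R : realFieldType) (m n : nat) (M : 'M[R]_(m, n)) : R :=
  \sum_(i < m) \sum_(j < n) `|M i j|.

Definition vinf (R : realFieldType) (n : nat) (x : 'cV[R]_n) : R :=
  \big[Num.max/0]_(i < n) `|x i 0|.
Definition vl1 (R : realFieldType) (n : nat) (x : 'cV[R]_n) : R :=
  \sum_(i < n) `|x i 0|.

(* Objective values of the program defining lambda_delta(A):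
   minimize ||B||_max over B in R^{k x D} s.t. ||BA - I_k||_max <= delta *)
Definition lambda_values (R : realFieldType) (D k : nat) (delta : R)
    (A : 'M[R]_(D, k)) (y : R) : Prop :=
  exists B : 'M[R]_(k, D), mxmaxnorm (B *m A - 1%:M) <= delta /\ y = mxmaxnorm B.

Definition dual_values (R : realFieldType) (D k : nat) (delta : R)
    (A : 'M[R]_(D, k)) (y : R) : Prop :=
  exists x : 'cV[R]_k, vl1 (A *m x) <= 1 /\ y = vinf x - delta * vl1 x.

Definition trace_values (R : realFieldType) (D k : nat) (delta : R)
    (A : 'M[R]_(D, k)) (y : R) : Prop :=
  exists Q : 'M[R]_k, mxl1 (Q *m A^T) <= 1 /\ y = \tr Q - delta * mxl1 Q.

Definition is_inf (R : realFieldType) (S : R -> Prop) (v : R) : Prop :=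
  (forall y, S y -> v <= y) /\ (forall w, (forall y, S y -> w <= y) -> w <= v).
Definition is_sup (R : realFieldType) (S : R -> Prop) (v : R) : Prop :=
  (forall y, S y -> y <= v) /\ (forall w, (forall y, S y -> y <= w) -> v <= w).
Definition is_max (R : realFieldType) (S : R -> Prop) (v : R) : Prop :=
  S v /\ (forall y, S y -> y <= v).

From HB Require Import structures.
From mathcomp Require Import all_boot all_order all_algebra.
From mathcomp Require Import ring lra.
Set Implicit Arguments. Unset Strict Implicit. Unset Printing Implicit Defensive.
Import Order.TTheory GRing.Theory Num.Theory.
Local Open Scope ring_scope.

(* Weak duality is the identity x = B (A x) - (B A - I) x, giving
   ||x||_inf <= ||B||_max ||A x||_1 + delta ||x||_1, and its trace form
   tr Q = <B, Q A^T> - <B A - I, Q>.  Strong duality decouples over the rows of B: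
   row i is the linear program  min ||b||_inf  s.t.  ||A^T b - e_i||_inf <= delta,
   whose dual is  max x_i - delta ||x||_1  s.t.  ||A x||_1 <= 1.  Farkas' lemma,
   proved by Fourier-Motzkin elimination, yields a primal-dual pair with equal values:
   an infeasibility certificate would have to avoid the constraints
   |b_d| <= x_i - delta ||x||_1 altogether, and then it forces A w = 0 for some w with
   w_i < 0, which full column rank forbids.  Finally the rank-one matrix Q = +-e_i x^T carries
   the dual optimum over to the trace program. *)

Section Farkas.
Variable R : realFieldType.

Lemma sum_eq_mull (I : finType) (p : I) (f : I -> R) :
  \sum_i (i == p)%:R * f i = f p.
Proof.
by rewrite (bigD1 p) //= eqxx mul1r big1 ?addr0 // => i /negbTE ->; rewrite mul0r.
Qed.

Lemma sum_comb_mull (I K : finType) (y : K -> R) (m : K -> I -> R) (f : I -> R) :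
  \sum_i (\sum_r y r * m r i) * f i = \sum_r y r * \sum_i m r i * f i.
Proof.
under eq_bigr do rewrite mulr_suml.
rewrite exchange_big; apply: eq_bigr => r _.
by rewrite mulr_sumr; apply: eq_bigr => i _; rewrite mulrA.
Qed.

Lemma exists_between (I : finType) (P N : pred I) (L U : I -> R) :
  (forall p q, P p -> N q -> L q <= U p) ->
  exists t, (forall q, N q -> L q <= t) /\ (forall p, P p -> t <= U p).
Proof.
move=> LU; case: (pickP N) => [q0 Nq0|N0].
  exists (\big[Order.max/L q0]_(q | N q) L q); split.
    by move=> q Nq; apply: le_bigmax_cond.
  by move=> p Pp; apply: bigmax_le => [|q Nq]; apply: LU.
case: (pickP P) => [p0 Pp0|P0].
  exists (\big[Order.min/U p0]_(p | P p) U p); split; first by move=> q; rewrite N0.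
  by move=> p Pp; apply: bigmin_le_cond.
by exists 0; split => [q|p]; rewrite ?N0 ?P0.
Qed.

Section FourierMotzkin.
Variables (I : finType) (al : I -> R).

(* Fourier-Motzkin elimination of a variable with coefficients [al]: keep the
   inequalities where it does not occur, and add up each pair in which it
   occurs with opposite signs, scaled so that it cancels. *)
Definition fm_weight (r : I + I * I) (i : I) : R :=
  match r with
  | inl p => (al p == 0)%:R * (i == p)%:R
  | inr (p, q) => ((0 < al p) && (al q < 0))%:R *
                  ((i == p)%:R * - al q + (i == q)%:R * al p)
  end.

Lemma fm_weight_ge0 r i : 0 <= fm_weight r i.
Proof.
case: r => [p|[p q]] /=; first by rewrite mulr_ge0.
case: andP => [[alp alq]|_]; last by rewrite mul0r.
by rewrite mul1r addr_ge0 // mulr_ge0 // ?oppr_ge0 ltW.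
Qed.

Lemma fm_weight_cancel r : \sum_i fm_weight r i * al i = 0.
Proof.
case: r => [p|[p q]] /=; under eq_bigr do rewrite -mulrA; rewrite -mulr_sumr.
  by rewrite sum_eq_mull; have [->|_] := eqVneq (al p) 0; rewrite ?mulr0 ?mul0r.
under eq_bigr do rewrite mulrDl -!mulrA.
by rewrite big_split /= !sum_eq_mull [al p * _]mulrC mulNr addNr mulr0.
Qed.

Lemma fm_extend (s c : I -> R) :
  (forall r, \sum_i fm_weight r i * s i <= \sum_i fm_weight r i * c i) ->
  exists t, forall i, al i * t + s i <= c i.
Proof.
move=> fm.
pose bnd i := (c i - s i) / al i.
have bnd_le p q : 0 < al p -> al q < 0 -> bnd q <= bnd p.
  move=> alp alq; have := fm (inr (p, q)); rewrite /= alp alq /=.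
  under eq_bigr do rewrite mul1r mulrDl -!mulrA.
  under [X in _ <= X]eq_bigr do rewrite mul1r mulrDl -!mulrA.
  rewrite !big_split /= !sum_eq_mull => h.
  have bndp : c p - s p = bnd p * al p by rewrite /bnd divfK ?gt_eqF.
  have bndq : c q - s q = bnd q * al q by rewrite /bnd divfK ?lt_eqF.
  have : 0 <= - al q * (c p - s p) + al p * (c q - s q) by lra.
  rewrite bndp bndq (_ : _ + _ = (al p * - al q) * (bnd p - bnd q)); last by ring.
  by rewrite pmulr_rge0 ?subr_ge0 // mulr_gt0 ?oppr_gt0.
have [t [tN tP]] := exists_between bnd_le.
exists t => i; have [alN|alP|al0] := ltgtP (al i) 0.
- have := tN i alN; rewrite -(ler_nM2l alN) /bnd [al i * (_ / _)]mulrC divfK ?lt_eqF //; lra.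
- have := tP i alP; rewrite -(ler_pM2l alP) /bnd [al i * (_ / _)]mulrC divfK ?gt_eqF //; lra.
- have := fm (inl i); rewrite /= al0 eqxx.
  by under eq_bigr do rewrite mul1r; under [X in _ <= X]eq_bigr do rewrite mul1r;
    rewrite !sum_eq_mull mul0r add0r.
Qed.

End FourierMotzkin.

Lemma farkas_ord n (I : finType) (a : I -> 'I_n -> R) (c : I -> R) :
  (forall y : I -> R, (forall i, 0 <= y i) -> (forall j, \sum_i y i * a i j = 0) ->
     0 <= \sum_i y i * c i) ->
  exists x : 'I_n -> R, forall i, \sum_j a i j * x j <= c i.
Proof.
elim: n I a c => [|n IHn] I a c nocert.
  exists (fun _ => 0) => i; rewrite big_ord0.
  have := nocert (fun i' => (i' == i)%:R); rewrite sum_eq_mull; apply=> [i'|[]//].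
  exact: ler0n.
pose al i := a i ord0; pose a' i j := a i (lift ord0 j).
pose a2 r j := \sum_i fm_weight al r i * a' i j.
pose c2 r := \sum_i fm_weight al r i * c i.
have [x hx] : exists x, forall r, \sum_j a2 r j * x j <= c2 r.
  apply: IHn => y y0 ya; rewrite /c2 -sum_comb_mull; apply: nocert => [i|j].
    by apply: sumr_ge0 => r _; rewrite mulr_ge0 ?fm_weight_ge0.
  rewrite sum_comb_mull; case: (unliftP ord0 j) => [j'|] ->; first exact: ya.
  by rewrite big1 // => r _; rewrite fm_weight_cancel mulr0.
have [t ht] : exists t, forall i, al i * t + \sum_j a' i j * x j <= c i.
  by apply: fm_extend => r; have := hx r; rewrite /a2 sum_comb_mull.
exists (fun j => if unlift ord0 j is Some j' then x j' else t) => i.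
by rewrite big_ord_recl unlift_none; under eq_bigr do rewrite liftK; exact: ht.
Qed.

Lemma farkas (I J : finType) (a : I -> J -> R) (c : I -> R) :
  (forall y : I -> R, (forall i, 0 <= y i) -> (forall j, \sum_i y i * a i j = 0) ->
     0 <= \sum_i y i * c i) ->
  exists x : J -> R, forall i, \sum_j a i j * x j <= c i.
Proof.
move=> nocert.
have [x hx] : exists x : 'I_#|J| -> R, forall i, \sum_k a i (enum_val k) * x k <= c i.
  apply: farkas_ord => y y0 ya; apply: nocert => // j.
  by have := ya (enum_rank j); rewrite enum_rankK.
exists (fun j => x (enum_rank j)) => i.
rewrite (reindex (@enum_val J J)); last by apply: onW_bij; apply: enum_val_bij.
by under eq_bigr do rewrite enum_valK; exact: hx.
Qed.

End Farkas.

Section Norms.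
Variable R : realFieldType.

Lemma bigmax0_cases (I : finType) (F : I -> R) :
  \big[Num.max/0]_i F i = 0 \/ exists i, \big[Num.max/0]_i F i = F i.
Proof.
apply: (big_ind (fun v => v = 0 \/ exists i, v = F i)); first by left.
  by move=> u v hu hv; case: (leP u v).
by move=> i _; right; exists i.
Qed.

Lemma le_mxmaxnorm m n (M : 'M[R]_(m, n)) i j : `|M i j| <= mxmaxnorm M.
Proof. exact: le_trans (le_bigmax _ (fun j => `|M i j|) j) (le_bigmax _ _ i). Qed.

Lemma mxmaxnorm_cases m n (M : 'M[R]_(m, n)) :
  mxmaxnorm M = 0 \/ exists i j, mxmaxnorm M = `|M i j|.
Proof.
rewrite /mxmaxnorm.
have [->|[i ->]] := bigmax0_cases (fun i => \big[Num.max/0]_j `|M i j|); first by left.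
have [->|[j ->]] := bigmax0_cases (fun j => `|M i j|); [by left | by right; exists i, j].
Qed.

Lemma mxmaxnorm_ge0 m n (M : 'M[R]_(m, n)) : 0 <= mxmaxnorm M.
Proof. by have [->|[i [j ->]]] := mxmaxnorm_cases M. Qed.

Lemma mxmaxnorm_le m n (M : 'M[R]_(m, n)) c :
  0 <= c -> (forall i j, `|M i j| <= c) -> mxmaxnorm M <= c.
Proof.
by move=> c0 Mc; apply: bigmax_le => // i _; apply: bigmax_le => // j _; apply: Mc.
Qed.

Lemma le_vinf n (x : 'cV[R]_n) i : `|x i 0| <= vinf x.
Proof. exact: (le_bigmax _ (fun i => `|x i 0|) i). Qed.

Lemma vinf_ge0 n (x : 'cV[R]_n) : 0 <= vinf x.
Proof. by rewrite /vinf; have [->|[i ->]] := bigmax0_cases (fun i => `|x i 0|). Qed.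

Lemma vl1_ge0 n (x : 'cV[R]_n) : 0 <= vl1 x.
Proof. exact: sumr_ge0. Qed.

Lemma normr_mulmx_le m n (M : 'M[R]_(m, n)) (v : 'cV[R]_n) i :
  `|(M *m v) i 0| <= mxmaxnorm M * vl1 v.
Proof.
rewrite mxE mulr_sumr; apply: le_trans (ler_norm_sum _ _ _) _.
by apply: ler_sum => l _; rewrite normrM ler_wpM2r ?le_mxmaxnorm.
Qed.

Lemma normr_mxtrace_mul_tr_le m n (M N : 'M[R]_(m, n)) :
  `|\tr (M *m N^T)| <= mxmaxnorm M * mxl1 N.
Proof.
rewrite /mxtrace /mxl1 mulr_sumr; apply: le_trans (ler_norm_sum _ _ _) _.
apply: ler_sum => i _; rewrite mxE mulr_sumr; apply: le_trans (ler_norm_sum _ _ _) _.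
by apply: ler_sum => j _; rewrite mxE normrM ler_wpM2r ?le_mxmaxnorm.
Qed.

Lemma mxl1_mul_tr m n (u : 'cV[R]_m) (v : 'cV[R]_n) :
  mxl1 (u *m v^T) = vl1 u * vl1 v.
Proof.
rewrite /mxl1 /vl1 mulr_suml; apply: eq_bigr => i _; rewrite mulr_sumr.
by apply: eq_bigr => j _; rewrite !mxE big_ord1 mxE normrM.
Qed.

End Norms.

Definition sgb (R : realFieldType) (b : bool) : R := if b then 1 else -1.

Section Signs.
Variable R : realFieldType.

Lemma normr_sgb b : `|sgb R b| = 1.
Proof. by case: b; rewrite /sgb ?normrN normr1. Qed.

Lemma sgb_ge0_mul (v : R) : sgb R (0 <= v) * v = `|v|.
Proof.
rewrite /sgb; case: (lerP 0 v) => v0; first by rewrite mul1r ger0_norm.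
by rewrite mulN1r ltr0_norm.
Qed.

Lemma normr_sum_sgb_le (I : finType) (w : I -> R) (s : I -> bool) :
  (forall t, 0 <= w t) -> `|\sum_t w t * sgb R (s t)| <= \sum_t w t.
Proof.
move=> w0; apply: le_trans (ler_norm_sum _ _ _) _.
by apply: ler_sum => t _; rewrite normrM normr_sgb mulr1 ger0_norm.
Qed.

End Signs.

Section WeakDuality.
Variables (R : realFieldType) (D k : nat) (A : 'M[R]_(D, k)) (delta : R).
Hypothesis delta_ge0 : 0 <= delta.

Lemma dual_le_lambda (B : 'M[R]_(k, D)) (x : 'cV[R]_k) :
  mxmaxnorm (B *m A - 1%:M) <= delta -> vl1 (A *m x) <= 1 ->
  vinf x - delta * vl1 x <= mxmaxnorm B.
Proof.
move=> hB hx; rewrite lerBlDr; apply: bigmax_le => [|i _].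
  by rewrite addr_ge0 ?mxmaxnorm_ge0 ?mulr_ge0 ?vl1_ge0.
have ex : x = B *m (A *m x) - (B *m A - 1%:M) *m x.
  by rewrite mulmxBl mul1mx mulmxA opprB addrC subrK.
rewrite {1}ex [(_ - _ : 'cV_k) i 0]mxE [(- _ : 'cV_k) i 0]mxE.
apply: le_trans (ler_normB _ _) _; apply: lerD.
  apply: le_trans (normr_mulmx_le _ _ _) _.
  by rewrite ler_piMr ?mxmaxnorm_ge0.
apply: le_trans (normr_mulmx_le _ _ _) _.
by rewrite ler_wpM2r ?vl1_ge0.
Qed.

Lemma trace_le_lambda (B : 'M[R]_(k, D)) (Q : 'M[R]_k) :
  mxmaxnorm (B *m A - 1%:M) <= delta -> mxl1 (Q *m A^T) <= 1 ->
  \tr Q - delta * mxl1 Q <= mxmaxnorm B.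
Proof.
move=> hB hQ; rewrite lerBlDr.
have -> : \tr Q = \tr (B *m (Q *m A^T)^T) - \tr ((B *m A - 1%:M) *m Q^T).
  rewrite trmx_mul trmxK mulmxA mulmxBl mul1mx raddfB /= mxtrace_tr.
  by rewrite opprB addrC subrK.
apply: le_trans (ler_norm _) _; apply: le_trans (ler_normB _ _) _; apply: lerD.
  apply: le_trans (normr_mxtrace_mul_tr_le _ _) _.
  by rewrite ler_piMr ?mxmaxnorm_ge0.
apply: le_trans (normr_mxtrace_mul_tr_le _ _) _.
by rewrite ler_wpM2r // sumr_ge0 // => i _; rewrite sumr_ge0.
Qed.

Lemma trace_ge_dual (x : 'cV[R]_k) : exists2 Q : 'M[R]_k,
  mxl1 (Q *m A^T) <= vl1 (A *m x) & vinf x - delta * vl1 x <= \tr Q - delta * mxl1 Q.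
Proof.
have [x0|[i0 xi0]] := bigmax0_cases (fun i => `|x i 0|).
  have l0 m n : mxl1 (0 : 'M[R]_(m, n)) = 0.
    by rewrite /mxl1 big1 // => i _; rewrite big1 // => j _; rewrite mxE normr0.
  exists 0; rewrite ?mul0mx l0 ?vl1_ge0 // mxtrace0 mulr0 subr0 /vinf x0 sub0r.
  by rewrite oppr_le0 mulr_ge0 ?vl1_ge0.
pose s := sgb R (0 <= x i0 0).
pose u : 'cV[R]_k := \col_a ((a == i0)%:R * s).
have u1 : vl1 u = 1.
  by rewrite /vl1; under eq_bigr do rewrite mxE normrM normr_nat; rewrite sum_eq_mull normr_sgb.
exists (u *m x^T).
  by rewrite -mulmxA -trmx_mul mxl1_mul_tr u1 mul1r.
rewrite mxl1_mul_tr u1 mul1r /mxtrace /vinf xi0 lerD2r.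
under eq_bigr do rewrite !mxE big_ord1 !mxE -mulrA.
by rewrite sum_eq_mull sgb_ge0_mul.
Qed.

End WeakDuality.

Lemma mulmx_full_col_rank_eq0 (F : fieldType) m n p (M : 'M[F]_(m, n)) (w : 'M[F]_(n, p)) :
  \rank M = n -> M *m w = 0 -> w = 0.
Proof.
move=> rankM Mw0; have freeT : row_free M^T by rewrite /row_free mxrank_tr rankM.
by apply: trmx_inj; apply/eqP; rewrite trmx0 -(mulmx_free_eq0 _ freeT) -trmx_mul Mw0 trmx0.
Qed.

Section RowDuality.
Variables (R : realFieldType) (D k : nat) (A : 'M[R]_(D, k)) (delta : R) (i : 'I_k).
Hypotheses (rankA : \rank A = k) (delta_ge0 : 0 <= delta).

Definition optimal_row_pair (b : 'I_D -> R) (x : 'cV[R]_k) : Prop :=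
  [/\ forall l, `|\sum_d b d * A d l - (l == i)%:R| <= delta,
      vl1 (A *m x) <= 1 &
      forall d, `|b d| <= x i 0 - delta * vl1 x].

Lemma row_certificate_value_ge0 (w q rho : 'I_k -> R) (m pi : 'I_D -> R) (M N : R) :
  (forall l, `|w l| <= q l) -> 0 <= M -> (forall d, `|m d| <= M) ->
  (forall j, `|rho j| <= N) -> \sum_d `|pi d| <= N ->
  (forall d, \sum_l w l * A d l + pi d = 0) ->
  (forall j, \sum_d m d * A d j - N * (j == i)%:R + delta * rho j = 0) ->
  0 <= delta * \sum_l q l + w i + M.
Proof.
move=> wq M0 mM rhoN piN colb colx.
have q0 l : 0 <= q l := le_trans (normr_ge0 _) (wq l).
have [Npos|N_le0] := ltrP 0 N; last first.
  have pi0 d : pi d = 0.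
    apply/eqP; rewrite -normr_le0; apply: le_trans N_le0; apply: le_trans piN.
    by rewrite (bigD1 d) //= lerDl sumr_ge0.
  have /matrixP/(_ i 0) : \col_l w l = 0.
    apply: (mulmx_full_col_rank_eq0 rankA); apply/matrixP => d j; rewrite !mxE -[RHS](colb d).
    by rewrite pi0 addr0; apply: eq_bigr => l _; rewrite mxE mulrC.
  by rewrite !mxE => ->; rewrite addr0 addr_ge0 ?mulr_ge0 ?sumr_ge0.
(* Pair the x-columns with w and substitute A w = - pi from the b-columns. *)
have Nwi : N * w i = - \sum_d m d * pi d + delta * \sum_j rho j * w j.
  have colx' j : N * (j == i)%:R = \sum_d m d * A d j + delta * rho j.
    by have := colx j; lra.
  rewrite -(sum_eq_mull i (fun j => N * w j)).
  under eq_bigr do rewrite mulrA [_ * N]mulrC colx' mulrDl.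
  rewrite big_split /= sum_comb_mull [delta * _]mulr_sumr -sumrN; congr (_ + _).
    apply: eq_bigr => d _; rewrite -mulrN; congr (_ * _).
    have -> : \sum_j A d j * w j = \sum_l w l * A d l by under eq_bigr do rewrite mulrC.
    by have := colb d; lra.
  by apply: eq_bigr => j _; rewrite mulrA.
have mpi : \sum_d m d * pi d <= M * N.
  apply: le_trans (ler_wpM2l M0 piN); rewrite mulr_sumr; apply: ler_sum => d _.
  by apply: le_trans (ler_norm _) _; rewrite normrM ler_wpM2r.
have rhow : - \sum_j rho j * w j <= N * \sum_l q l.
  rewrite -sumrN mulr_sumr; apply: ler_sum => j _; apply: le_trans (ler_norm _) _.
  by rewrite normrN normrM ler_pM.
have := ler_wpM2l delta_ge0 rhow; rewrite -(pmulr_rge0 _ Npos) => h; lra.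
Qed.

Definition row_var := ('I_D + 'I_k)%type.
Definition row_ineq :=
  (('I_k * bool) + ({ffun 'I_D -> bool} + ('I_D * bool * {ffun 'I_k -> bool})))%type.

(* The pair (b, x) of [optimal_row_pair] as the solution of one linear system:
   [inl (l, s)] encodes |(b A)_l - [l = i]| <= delta, [inr (inl sig)] encodes
   ||A x||_1 <= 1 and [inr (inr (d, s, sig))] encodes |b_d| <= x_i - delta ||x||_1,
   each absolute value being unfolded over all signs s and sign vectors sig. *)
Definition row_coef (r : row_ineq) (v : row_var) : R :=
  match r, v with
  | inl (l, s), inl d => sgb R s * A d l
  | inr (inl sig), inr j => \sum_d sgb R (sig d) * A d j
  | inr (inr t), inl d => (d == t.1.1)%:R * sgb R t.1.2
  | inr (inr t), inr j => - (j == i)%:R + delta * sgb R (t.2 j)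
  | _, _ => 0
  end.

Definition row_rhs (r : row_ineq) : R :=
  match r with
  | inl (l, s) => delta + sgb R s * (l == i)%:R
  | inr (inl _) => 1
  | inr (inr _) => 0
  end.

Lemma row_feasible_optimal (X : row_var -> R) :
  (forall r, \sum_v row_coef r v * X v <= row_rhs r) ->
  optimal_row_pair (fun d => X (inl d)) (\col_j X (inr j)).
Proof.
move=> feas; set x := \col_j _; have xE j : x j 0 = X (inr j) by rewrite mxE.
split.
- move=> l; have h s : sgb R s * \sum_d X (inl d) * A d l <= delta + sgb R s * (l == i)%:R.
    have := feas (inl (l, s)); rewrite /row_coef /row_rhs big_sumType /=.
    rewrite [X in _ + X <= _]big1 ?addr0 => [|j _]; last by rewrite mul0r.
    by move=> h; rewrite mulr_sumr; under eq_bigr do rewrite mulrA mulrAC.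
  by have := h true; have := h false; rewrite /sgb ler_norml => h1 h2; apply/andP; split; lra.
- pose sig := [ffun d => 0 <= (A *m x) d 0].
  have := feas (inr (inl sig)); rewrite /row_coef /row_rhs big_sumType /=.
  rewrite big1 ?add0r => [|d _]; last by rewrite mul0r.
  rewrite sum_comb_mull; congr (_ <= _); apply: eq_bigr => d _.
  rewrite ffunE -sgb_ge0_mul; congr (_ * _); rewrite mxE.
  by apply: eq_bigr => j _; rewrite xE.
- move=> d; pose sig := [ffun j => 0 <= x j 0].
  have h s : sgb R s * X (inl d) - x i 0 + delta * vl1 x <= 0.
    have := feas (inr (inr (d, s, sig))); rewrite /row_coef /row_rhs big_sumType /=.
    under eq_bigr do rewrite -mulrA.
    under [X in _ + X]eq_bigr do rewrite mulrDl.
    rewrite sum_eq_mull big_split /= -addrA; congr (_ + _ <= _); congr (_ + _).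
      by under eq_bigr do rewrite mulNr; rewrite sumrN sum_eq_mull xE.
    rewrite /vl1 mulr_sumr; apply: eq_bigr => j _.
    by rewrite ffunE -sgb_ge0_mul xE mulrA.
  by have := h true; have := h false; rewrite /sgb ler_norml => h1 h2; apply/andP; split; lra.
Qed.

Lemma sum_row_ineq (F : row_ineq -> R) : \sum_r F r =
  \sum_l (F (inl (l, true)) + F (inl (l, false))) + \sum_sig F (inr (inl sig)) +
  \sum_t F (inr (inr t)).
Proof.
rewrite big_sumType /= big_sumType /= addrA; congr (_ + _ + _).
transitivity (\sum_l \sum_s F (inl (l, s))); last by apply: eq_bigr => l _; rewrite big_bool.
by rewrite pair_big; apply: eq_bigr => -[].
Qed.

Section RowCertificate.
Variable y : row_ineq -> R.

Let w l := y (inl (l, true)) - y (inl (l, false)).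
Let q l := y (inl (l, true)) + y (inl (l, false)).
Let M := \sum_sig y (inr (inl sig)).
Let m d := \sum_sig y (inr (inl sig)) * sgb R (sig d).
Let N := \sum_t y (inr (inr t)).
Let pi d := \sum_t y (inr (inr t)) * ((d == t.1.1)%:R * sgb R t.1.2).
Let rho j := \sum_t y (inr (inr t)) * sgb R (t.2 j).

Lemma row_certificate_col_b d :
  \sum_r y r * row_coef r (inl d) = \sum_l w l * A d l + pi d.
Proof.
rewrite sum_row_ineq [X in _ + X + _]big1 ?addr0 => [|sig _]; last by rewrite mulr0.
by congr (_ + _); apply: eq_bigr => l _; rewrite /w /row_coef /sgb /=; ring.
Qed.

Lemma row_certificate_col_x j :
  \sum_r y r * row_coef r (inr j) = \sum_d m d * A d j - N * (j == i)%:R + delta * rho j.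
Proof.
rewrite sum_row_ineq big1 ?add0r => [|l _]; last by rewrite /row_coef /= !mulr0 addr0.
rewrite /m sum_comb_mull -addrA; congr (_ + _).
rewrite /row_coef /=; under eq_bigr do rewrite mulrDr.
rewrite big_split /= /N /rho mulr_suml mulr_sumr -sumrN.
by congr (_ + _); apply: eq_bigr => t _; rewrite ?mulrN // mulrCA.
Qed.

Lemma row_certificate_rhs :
  \sum_r y r * row_rhs r = delta * \sum_l q l + w i + M.
Proof.
rewrite sum_row_ineq [X in _ + X]big1 ?addr0 => [|t _]; last by rewrite mulr0.
congr (_ + _); last by apply: eq_bigr => sig _; rewrite mulr1.
rewrite mulr_sumr -(sum_eq_mull i w) -big_split; apply: eq_bigr => l _.
by rewrite /w /q /row_rhs /sgb /=; ring.
Qed.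

Hypothesis y_ge0 : forall r, 0 <= y r.

Lemma row_certificate_bounds :
  [/\ forall l, `|w l| <= q l, 0 <= M, forall d, `|m d| <= M,
      forall j, `|rho j| <= N & \sum_d `|pi d| <= N].
Proof.
split=> [l||d|j|].
- have := y_ge0 (inl (l, true)); have := y_ge0 (inl (l, false)).
  by rewrite /w /q ler_norml => h1 h2; apply/andP; split; lra.
- exact: sumr_ge0.
- exact: normr_sum_sgb_le.
- exact: normr_sum_sgb_le.
apply: (@le_trans _ _ (\sum_d \sum_t (d == t.1.1)%:R * y (inr (inr t)))).
  apply: ler_sum => d _; apply: le_trans (ler_norm_sum _ _ _) _; apply: ler_sum => t _.
  by rewrite mulrC !normrM normr_sgb mulr1 normr_nat ger0_norm.
by rewrite exchange_big /=; under eq_bigr do rewrite sum_eq_mull.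
Qed.

End RowCertificate.

Lemma row_certificate_ge0 (y : row_ineq -> R) :
  (forall r, 0 <= y r) -> (forall v, \sum_r y r * row_coef r v = 0) ->
  0 <= \sum_r y r * row_rhs r.
Proof.
move=> y0 ya; have [wq M0 mM rhoN piN] := row_certificate_bounds y0.
rewrite row_certificate_rhs; apply: row_certificate_value_ge0 wq M0 mM rhoN piN _ _.
  by move=> d; rewrite -row_certificate_col_b.
by move=> j; rewrite -row_certificate_col_x.
Qed.

Lemma row_duality : exists b x, optimal_row_pair b x.
Proof.
have [X feas] := farkas row_certificate_ge0.
by exists (fun d => X (inl d)), (\col_j X (inr j)); exact: row_feasible_optimal.
Qed.

End RowDuality.

Section OptimalValues.
Variable R : realFieldType.

Lemma is_inf_max_of_duality (S T : R -> Prop) v :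
  (forall y z, S y -> T z -> z <= y) -> S v -> T v -> is_inf S v /\ is_max T v.
Proof.
move=> weak Sv Tv; split; split=> //.
- by move=> y Sy; apply: weak.
- by move=> w; apply.
- by move=> y Ty; apply: weak.
Qed.

Lemma is_sup_of_duality (S T U : R -> Prop) v :
  (forall y z, S y -> U z -> z <= y) -> (forall z, T z -> exists2 u, U u & z <= u) ->
  S v -> T v -> is_sup U v.
Proof.
move=> weak dom Sv Tv; split=> [z Uz|w ubw]; first exact: weak.
by have [u Uu vu] := dom v Tv; exact: le_trans vu (ubw u Uu).
Qed.

End OptimalValues.

Lemma optimal_pair (R : realFieldType) (D k : nat) (A : 'M[R]_(D, k)) (delta : R) :
  \rank A = k -> 0 <= delta -> exists B x,
  [/\ mxmaxnorm (B *m A - 1%:M) <= delta, vl1 (A *m x) <= 1 &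
      vinf x - delta * vl1 x = mxmaxnorm B].
Proof.
move=> rankA delta_ge0.
have /fin_all_exists [f opt] : forall i, exists bx : ('I_D -> R) * 'cV[R]_k,
    optimal_row_pair A delta i bx.1 bx.2.
  by move=> i; have [b [x bx]] := row_duality i rankA delta_ge0; exists (b, x).
pose B := \matrix_(i, d) (f i).1 d.
have hB : mxmaxnorm (B *m A - 1%:M) <= delta.
  apply: mxmaxnorm_le => // i l; have [hb _ _] := opt i.
  by rewrite !mxE eq_sym; under eq_bigr do rewrite mxE; exact: hb.
have [x hx Bx] : exists2 x, vl1 (A *m x) <= 1 & mxmaxnorm B <= vinf x - delta * vl1 x.
  have [->|[i [d ->]]] := mxmaxnorm_cases B.
    have vl1_0 n : vl1 (0 : 'cV[R]_n) = 0 by apply: big1 => j _; rewrite mxE normr0.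
    by exists 0; rewrite ?mulmx0 vl1_0 ?ler01 // mulr0 subr0 vinf_ge0.
  have [_ hx hb] := opt i; exists (f i).2 => //; rewrite mxE; apply: le_trans (hb d) _.
  by rewrite lerD2r; exact: le_trans (ler_norm _) (le_vinf _ _).
by exists B, x; split=> //; apply: le_anti; rewrite Bx (dual_le_lambda delta_ge0 hB hx).
Qed.

Unset Implicit Arguments.

Theorem mainTheorem2 (R : realFieldType) (D k : nat) (A : 'M[R]_(D, k)) (delta : R)
  (hA : forall i j, 0 <= A i j) (hrank : \rank A = k) (hdelta : 0 <= delta) :
  exists lam : R,
    is_inf (lambda_values delta A) lam /\
    is_max (dual_values delta A) lam /\
    is_sup (trace_values delta A) lam.
Proof.
have [B [x [hB hx Bx]]] := optimal_pair hrank hdelta.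
have lamB : lambda_values delta A (mxmaxnorm B) by exists B.
have dualx : dual_values delta A (mxmaxnorm B) by exists x; rewrite Bx.
have [inf max] : is_inf (lambda_values delta A) (mxmaxnorm B) /\
                 is_max (dual_values delta A) (mxmaxnorm B).
  apply: is_inf_max_of_duality lamB dualx => _ _ [B' [hB' ->]] [x' [hx' ->]].
  exact: (dual_le_lambda hdelta hB' hx').
exists (mxmaxnorm B); split=> //; split=> //; apply: is_sup_of_duality lamB dualx.
  by move=> _ _ [B' [hB' ->]] [Q [hQ ->]]; exact: (trace_le_lambda hB' hQ).
move=> _ [x' [hx' ->]]; have [Q hQ xQ] := trace_ge_dual A hdelta x'.
by exists (\tr Q - delta * mxl1 Q) => //; exists Q; split=> //; exact: le_trans hQ hx'.
Qed.
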